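(* Let $n\ge5$. (a) Let $Y=Y^{(n)}=(Y_{n+1},Y_n,\ldots,Y_1)$ be a $\{0,1\}$-valued Markov chain (run in the order $Y_{n+1},\ldots,Y_1$) with $Y_{n+1}=1$, transition probabilities $\mathbb{P}(Y_i=0\mid Y_{i+1}=0)=p_i$, $\mathbb{P}(Y_i=1\mid Y_{i+1}=0)=q_i=1-p_i$, $\mathbb{P}(Y_i=0\mid Y_{i+1}=1)=1$ for $i=3,\ldots,n$, where $p_i\in(0,1)$, and with $Y_2=0$, $Y_1=1$ almost surely; set $p_2:=1$. Assume $\frac{p_iq_{i-1}}{p_{i-2}q_i}>1$ for every $4\le i\le n-1$. Then, writing $Y$ also for $(Y_n,\ldots,Y_1)$, $$\mathbb{P}(Y\in\Lambda_2(n))>\mathbb{P}(Y\in\Lambda_1(n)).$$ (b) Let $\theta>0$ and let $\eta=(\eta_n,\ldots,\eta_1)$ have the law of $(\xi_n,\ldots,\xi_1)$ conditioned on $(\xi_n,\ldots,\xi_1)\in\Delta_n$. Then $\mathbb{P}(\eta\in\Lambda_2(n))>\mathbb{P}(\eta\in\Lambda_1(n))$, and $$\mathbb{P}(\eta\in\Lambda_2(n))=\sum_{r\in\Lambda_1(n)}\left(\prod_{i=1}^{|r|-1}\frac{\sigma_i(r)-1}{n+1-\sigma_i(r)}\right)\mathbb{P}(\eta=r).$$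
   Context: Let $\xi_1,\xi_2,\ldots$ be independent Bernoulli random variables with $\mathbb{P}(\xi_i=1)=\theta/(\theta+i-1)$, $\mathbb{P}(\xi_i=0)=(i-1)/(\theta+i-1)$. For $n\ge2$, $\Delta_n$ is the set of $(a_n,a_{n-1},\ldots,a_1)\in\{0,1\}^n$ with $a_n=0$, $a_1=1$, and no index $2\le i\le n$ with $a_i=a_{i-1}=1$. For $r=(r_n,\ldots,r_1)\in\Delta_n$, $|r|$ denotes the number of indices $i$ with $r_i=1$. Set $\sigma_0(r)=n+1$, and for $j=1,\ldots,|r|$ let $\sigma_j(r)$ be the largest index $i<\sigma_{j-1}(r)$ with $r_i=1$ (so $\sigma_{|r|}(r)=1$). The numbers $\sigma_{l-1}(r)-\sigma_l(r)$, $l=1,\ldots,|r|$, are the successive spacings (cycle lengths). $r\in\Delta_n$ is weakly increasing if $\sigma_{l-1}(r)-\sigma_l(r)\le\sigma_l(r)-\sigma_{l+1}(r)$ for all $l=1,\ldots,|r|-1$, and weakly decreasing if $\sigma_{l-1}(r)-\sigma_l(r)\ge\sigma_l(r)-\sigma_{l+1}(r)$ for all such $l$. $\Lambda_1(n)$ (resp. $\Lambda_2(n)$) is the set of weakly increasing (resp. weakly decreasing) elements of $\Delta_n$. *)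

From HB Require Import structures.
From mathcomp Require Import all_boot all_order all_algebra.
From mathcomp Require Import reals.
Set Implicit Arguments. Unset Strict Implicit. Unset Printing Implicit Defensive.
Import Order.TTheory GRing.Theory Num.Theory.

(* A vector (a_n, ..., a_1) in {0,1}^n is encoded as r : {ffun 'I_n -> bool},
   with a_i = r (i-1) (true = 1).  [bit r i] is a_i for 1 <= i <= n,
   and false for any other index. *)
Section Vectors.
Variable n : nat.
Implicit Type r : {ffun 'I_n -> bool}.

Definition bit r (i : nat) : bool := [exists j : 'I_n, (j.+1 == i) && r j].

Definition inDelta r : bool :=
  [&& ~~ bit r n, bit r 1 &
      all (fun i => ~~ (bit r i && bit r i.-1)) (iota 2 n.-1)].

Definition weight r : nat := \sum_(j < n) (r j : nat).

Fixpoint sigma r (j : nat) : nat :=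
  match j with
  | 0 => n.+1
  | j'.+1 => \max_(i < sigma r j' | bit r i) (i : nat)
  end.

Definition weakly_increasing r : bool :=
  all (fun l => sigma r l.-1 - sigma r l <= sigma r l - sigma r l.+1)
      (iota 1 (weight r).-1).

Definition weakly_decreasing r : bool :=
  all (fun l => sigma r l.-1 - sigma r l >= sigma r l - sigma r l.+1)
      (iota 1 (weight r).-1).

Definition Lambda1 r : bool := inDelta r && weakly_increasing r.
Definition Lambda2 r : bool := inDelta r && weakly_decreasing r.
End Vectors.

Local Open Scope ring_scope.

Definition markov_trans (R : realType) (p : nat -> R) (i : nat)
  (prev cur : bool) : R :=
  if prev then (if cur then 0 else 1)
  else (if cur then 1 - p i else p i).

Definition markovP (R : realType) (n : nat) (p : nat -> R)
  (r : {ffun 'I_n -> bool}) : R :=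
  (\prod_(3 <= i < n.+1)
     markov_trans p i (if i.+1 == n.+1 then true else bit r i.+1) (bit r i))
  * (if bit r 2 then 0 else 1) * (if bit r 1 then 1 else 0).

Definition xiP (R : realType) (n : nat) (theta : R)
  (r : {ffun 'I_n -> bool}) : R :=
  \prod_(1 <= i < n.+1)
     (if bit r i then theta / (theta + i%:R - 1)
      else (i%:R - 1) / (theta + i%:R - 1)).

Definition etaP (R : realType) (n : nat) (theta : R)
  (r : {ffun 'I_n -> bool}) : R :=
  if inDelta r then
    xiP theta r / (\sum_(s : {ffun 'I_n -> bool} | inDelta s) xiP theta s)
  else 0.

From HB Require Import structures.
From mathcomp Require Import all_boot all_order all_algebra.
From mathcomp Require Import reals.
From mathcomp Require Import ring zify.
Import Order.TTheory GRing.Theory Num.Theory.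
Set Implicit Arguments. Unset Strict Implicit. Unset Printing Implicit Defensive.

(* 1. When a_1 = 1, sigma_0 = n+1 > sigma_1 > ... > sigma_{|r|} = 1 lists the
      ones of r (sigma_struct), and any such list is sigma (sigma_char).
   2. The reversal rho : a_i |-> a_{n+2-i} (2 <= i <= n), a_1 fixed, is an
      involution of Delta_n with sigma_j(rho r) = n + 2 - sigma_{|r|-j}(r);
      it reverses the spacings, hence exchanges Lambda_1(n) and Lambda_2(n).
   3. If the spacings of r increase, then sigma_j + sigma_{|r|-j} >= n + 2.
   4. Comparison principle: a law equal on Delta_n to
      c * prod_{j=1}^{|r|-1} h(sigma_j(r)), with h > 0 nonincreasing on
      [3, n-1] and h(n-1) < h(3), satisfies P(r) <= P(rho r) on Lambda_1(n)
      by 3, strictly at r0 = (ones at 1 and n-1); summing over Lambda_1(n)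
      and reindexing by rho gives P(Lambda_1) < P(Lambda_2).
   5. Both laws have this form: h(i) = q_i / (p_i p_{i-1}) for Y, which
      decreases exactly under the hypothesis of (a), and h(i) = theta/(i-1)
      for eta.  For eta the ratio P(rho r)/P(r) is
      prod_j (sigma_j - 1)/(n + 1 - sigma_j), which gives the identity of (b). *)

Section Decreasing.
Variables (t : nat -> nat) (m : nat).
Hypothesis t_decr : forall j, j < m -> t j.+1 < t j.

Lemma decr_lt a b : a < b <= m -> t b < t a.
Proof.
elim: b => [|b IH] /andP[ab bm]; first by [].
case: (ltngtP a b) => [ab'|ba|<-]; last by apply: t_decr; lia.
  by apply: ltn_trans (t_decr bm) (IH _); rewrite ab' ltnW.
by move: ab; rewrite ltnS leqNgt ba.
Qed.

Lemma decr_le a b : a <= b <= m -> t b <= t a.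
Proof.
by case/andP; rewrite leq_eqVlt => /predU1P[-> //|ab bm]; rewrite ltnW ?decr_lt ?ab.
Qed.

Lemma decr_uniq : uniq [seq t j | j <- iota 1 m].
Proof.
rewrite map_inj_in_uniq ?iota_uniq // => a b; rewrite !mem_iota => Ha Hb E.
by case: (ltngtP a b) => // [ab|ba]; [have := @decr_lt a b | have := @decr_lt b a]; lia.
Qed.

End Decreasing.

Lemma perm_filter_index_iota (L : seq nat) a b : uniq L ->
  perm_eq [seq i <- index_iota a b | i \in L] [seq x <- L | a <= x < b].
Proof.
move=> uL; apply: uniq_perm; rewrite ?filter_uniq ?iota_uniq //.
by move=> x; rewrite !mem_filter mem_index_iota andbC.
Qed.

Section Sigma.
Variable n : nat.
Implicit Type r : {ffun 'I_n -> bool}.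

Lemma bit_ord r (j : 'I_n) : bit r j.+1 = r j.
Proof.
apply/existsP/idP => [[k /andP[/eqP kj rk]]|rj]; last by exists j; rewrite eqxx.
by have -> : j = k by apply/val_inj; case: kj.
Qed.

Lemma bit_range r i : bit r i -> 0 < i <= n.
Proof. by case/existsP => k /andP[/eqP <- _]; rewrite ltn_ord. Qed.

Lemma bit_ffun (P : nat -> bool) i :
  bit [ffun j : 'I_n => P j] i = (0 < i <= n) && P i.-1.
Proof.
apply/existsP/idP => [[k /andP[/eqP <- ]]|/andP[/andP[i0 iN] Pi]].
  by rewrite ffunE ltn_ord.
have lt : i.-1 < n by lia.
by exists (Ordinal lt); rewrite ffunE /= Pi andbT; apply/eqP; lia.
Qed.

(* One-step unfolding of sigma, which keeps [sigma r j] folded. *)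
Lemma sigmaS r j : sigma r j.+1 = \max_(i < sigma r j | bit r i) (i : nat).
Proof. by []. Qed.

(* Each [sigma r j.+1] is a position of a one strictly below [sigma r j]
   (or 0 when there is none), and it is the largest such position. *)
Lemma sigma_le r j : sigma r j.+1 <= (sigma r j).-1.
Proof. by rewrite sigmaS; apply/bigmax_leqP => i _; have := ltn_ord i; lia. Qed.

Lemma sigma_bound r j : sigma r j <= n.+1 - j.
Proof. by elim: j => [|j IH]; [rewrite subn0 | have := sigma_le r j; lia]. Qed.

Lemma sigma_ge r j i : bit r i -> i < sigma r j -> i <= sigma r j.+1.
Proof.
move=> bi lt; rewrite sigmaS.
exact: (@leq_bigmax_cond _ (fun k : 'I_(sigma r j) => bit r k)
          (fun k => nat_of_ord k) (Ordinal lt)).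
Qed.

Lemma sigma_bit r j : bit r 1 -> 1 < sigma r j ->
  bit r (sigma r j.+1) && (0 < sigma r j.+1).
Proof.
move=> b1 lt; have b1' : bit r (Ordinal lt) by [].
rewrite sigmaS; have [|i bi E] := @eq_bigmax_cond _ (fun k : 'I_(sigma r j) => bit r k)
                     (fun k => nat_of_ord k).
  by apply/card_gt0P; exists (Ordinal lt).
have bi' : bit r i := bi; rewrite E bi' /=.
have := @leq_bigmax_cond _ (fun k : 'I_(sigma r j) => bit r k)
          (fun k => nat_of_ord k) _ b1'.
by rewrite E /=; lia.
Qed.

Definition bits_ok r (t : nat -> nat) m :=
  forall i, 0 < i <= n -> bit r i = has (fun j => t j == i) (iota 1 m).

Lemma bit_mem r t m : bits_ok r t m ->
  forall i, bit r i = (0 < i <= n) && (i \in [seq t j | j <- iota 1 m]).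
Proof.
move=> H i; case: (boolP (0 < i <= n)) => iin /=.
  rewrite H //; apply/hasP/mapP => -[j ji E]; exists j => //.
    exact/esym/eqP.
  by rewrite E.
by apply/negbTE; apply: contra iin; apply: bit_range.
Qed.

Lemma weight_count r t m :
  (forall j, j < m -> t j.+1 < t j) ->
  (forall j, 0 < j <= m -> 0 < t j <= n) -> bits_ok r t m -> weight r = m.
Proof.
move=> t_decr t_range t_ok.
have -> : weight r = (\sum_(1 <= i < n.+1) bit r i)%N.
  by rewrite big_add1 /= big_mkord; apply: eq_bigr => i _; rewrite bit_ord.
set L := [seq t j | j <- iota 1 m].
have uL : uniq L by apply: decr_uniq.
transitivity (\sum_(1 <= i < n.+1 | i \in L) 1)%N.
  rewrite [RHS]big_mkcond /=; apply: eq_big_nat => i /andP[i1 i2].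
  by rewrite (bit_mem t_ok) (_ : (0 < i <= n) = true) //; apply/andP; lia.
rewrite -big_filter (perm_big _ (perm_filter_index_iota 1 n.+1 uL)).
rewrite big_filter sum1_count (@eq_in_count _ _ predT).
  by rewrite count_predT size_map size_iota.
move=> x /mapP[j]; rewrite mem_iota => jr ->.
by have := t_range j; rewrite /=; lia.
Qed.

Lemma sigma_char r t m : t 0 = n.+1 -> (forall j, j < m -> t j.+1 < t j) ->
  0 < t m -> bits_ok r t m ->
  (forall j, j <= m -> sigma r j = t j) /\ weight r = m.
Proof.
move=> t0 t_decr tm t_ok.
have t_range j : 0 < j <= m -> 0 < t j <= n.
  move=> jr; have := decr_le t_decr (a := j) (b := m).
  have := decr_le t_decr (a := 1) (b := j); have := t_decr 0; lia.
split; last exact: weight_count t_decr t_range t_ok.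
elim => [|j IH] jm; first by rewrite t0.
have sj := IH (ltnW jm).
apply/eqP; rewrite eqn_leq; apply/andP; split.
  rewrite sigmaS; apply/bigmax_leqP => i bi.
  have ilt : (i : nat) < t j by rewrite -sj ltn_ord.
  move: bi; rewrite (bit_mem t_ok) => /andP[_ /mapP[j' j'in E]].
  rewrite E in ilt *; move: j'in; rewrite mem_iota => j'r.
  have jj' : j < j'.
    rewrite ltnNge; apply/negP => jle.
    by have := decr_le t_decr (a := j') (b := j); lia.
  by have := decr_le t_decr (a := j.+1) (b := j'); lia.
apply: sigma_ge; last by rewrite sj; apply: t_decr.
rewrite (bit_mem t_ok); apply/andP; split; first by apply: t_range; lia.
by apply/mapP; exists j.+1 => //; rewrite mem_iota; lia.
Qed.

Lemma sigma_lists_ones r m : bit r 1 ->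
  (forall j, j < m -> 1 < sigma r j) -> sigma r m = 1 -> bits_ok r (sigma r) m.
Proof.
move=> b1 gt1 sm i /andP[i0 iN]; apply/idP/hasP.
  move=> bi.
  have cross j : j <= m -> i < sigma r j \/
      exists2 j', j' < j & sigma r j'.+1 <= i < sigma r j'.
    elim: j => [|j IH] jm; first by left; rewrite /=; lia.
    case: (IH (ltnW jm)) => [lt|[j' j'j H]]; last by right; exists j' => //; lia.
    by case: (ltnP i (sigma r j.+1)) => h; [left | right; exists j; lia].
  case: (cross m (leqnn m)) => [|[j' j'm /andP[h1 h2]]]; first by rewrite sm; lia.
  have := sigma_ge bi h2 => h3.
  by exists j'.+1; [rewrite mem_iota; lia | apply/eqP; lia].
move=> [[|j] jr /eqP E]; first by move: jr; rewrite mem_iota.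
move: jr; rewrite mem_iota => jr.
by have /andP[] := sigma_bit b1 (gt1 j ltac:(lia)); rewrite E.
Qed.

Lemma sigma_struct r : 0 < n -> bit r 1 ->
  [/\ 0 < weight r, (forall j, j < weight r -> sigma r j.+1 < sigma r j),
      sigma r (weight r) = 1 & bits_ok r (sigma r) (weight r)].
Proof.
move=> n0 b1.
have ex : exists j, sigma r j <= 1 by exists n; have := sigma_bound r n; lia.
case: (ex_minnP ex) => m sm_le minm.
have gt1 j : j < m -> 1 < sigma r j.
  by move=> jm; rewrite ltnNge; apply/negP => /minm; lia.
have m0 : 0 < m by case: m sm_le minm gt1 => //=; lia.
have sm : sigma r m = 1.
  case: m sm_le m0 gt1 {minm} => // m sm_le _ gt1.
  by have /andP[_] := sigma_bit b1 (gt1 m (ltnSn _)); lia.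
have decr j : j < m -> sigma r j.+1 < sigma r j.
  by move=> jm; have := sigma_le r j; have := gt1 j jm; lia.
have ones := sigma_lists_ones b1 gt1 sm.
have w : weight r = m.
  apply: (weight_count decr _ ones) => j jr.
  have := decr_le decr (a := j) (b := m); have := decr_le decr (a := 1) (b := j).
  by have := decr 0; rewrite /=; lia.
by rewrite w; split.
Qed.

End Sigma.

Section Delta.
Variable n : nat.
Implicit Type r : {ffun 'I_n -> bool}.

Lemma delta_noadj r i : inDelta r -> 2 <= i <= n -> ~~ (bit r i && bit r i.-1).
Proof. by move/and3P=> [_ _ /allP H] ir; apply: H; rewrite mem_iota; lia. Qed.

Lemma delta_b1 r : inDelta r -> bit r 1.
Proof. by case/and3P. Qed.

Lemma delta_bn r : inDelta r -> bit r n = false.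
Proof. by case/and3P => /negbTE. Qed.

Lemma delta_n_gt1 r : inDelta r -> 1 < n.
Proof.
case/and3P => bn b1 _; have := bit_range b1.
by case: (eqVneq n 1) => [n1|]; [move: bn; rewrite (congr1 (bit r) n1) b1 | lia].
Qed.

Lemma delta_b2 r : inDelta r -> bit r 2 = false.
Proof.
move=> D; have := delta_noadj D (i := 2); have := delta_n_gt1 D.
move=> n_gt1 /(_ ltac:(lia)).
by rewrite /= delta_b1 // andbT => /negbTE.
Qed.

Lemma delta_range r j : inDelta r -> 0 < j < weight r -> 3 <= sigma r j <= n.-1.
Proof.
move=> D jr; have n_gt1 := delta_n_gt1 D.
have [k0 decr sk ones] := sigma_struct (ltnW n_gt1) (delta_b1 D).
have := decr_lt decr (a := j) (b := weight r); have := decr_lt decr (a := 0) (b := j).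
rewrite sk /= => H1 H2.
have bj : bit r (sigma r j).
  by rewrite ones; [apply/hasP; exists j; rewrite ?mem_iota|]; lia.
have : sigma r j != n by apply: contraTneq bj => ->; rewrite delta_bn.
have : sigma r j != 2 by apply: contraTneq bj => ->; rewrite delta_b2.
lia.
Qed.

End Delta.

Section Reversal.
Variable n : nat.
Implicit Type r : {ffun 'I_n -> bool}.

(* The reversal rho: (a_n, ..., a_2, a_1) |-> (a_2, ..., a_n, a_1), i.e.
   position j (index j+1) goes to position n - j, position 0 is fixed. *)
Definition revo (j : 'I_n) : 'I_n :=
  if (j : nat) == 0 then j else insubd j (n - j).
Definition revf r : {ffun 'I_n -> bool} := [ffun j => r (revo j)].

Lemma revo_val j : (revo j : nat) = if (j : nat) == 0 then 0 else n - j.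
Proof.
rewrite /revo; case: eqP => [->//|jn0]; rewrite val_insubd.
by have := ltn_ord j; case: ifP => // /negbT; lia.
Qed.

Lemma revfK : involutive revf.
Proof.
move=> r; apply/ffunP => j; rewrite !ffunE; congr (r _); apply: ord_inj.
rewrite !revo_val; have := ltn_ord j.
case: (eqVneq (j : nat) 0) => [->//|j0] jn.
by rewrite (_ : (n - j == 0) = false); [lia | apply/eqP; lia].
Qed.

Lemma bit_rev r i : 2 <= i <= n -> bit (revf r) i = bit r (n.+2 - i).
Proof.
move=> ir; have lt : i.-1 < n by lia.
have lt2 : n - i.-1 < n by lia.
have -> : n.+2 - i = (Ordinal lt2).+1 by rewrite /=; lia.
have {1}-> : i = (Ordinal lt).+1 by rewrite /=; lia.
rewrite !bit_ord ffunE; congr (r _); apply: ord_inj.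
by rewrite revo_val /=; case: eqP => //; lia.
Qed.

Lemma bit_rev1 r : 0 < n -> bit (revf r) 1 = bit r 1.
Proof.
move=> n0; rewrite -[1]/((Ordinal n0).+1) !bit_ord ffunE.
by congr (r _); apply: ord_inj; rewrite revo_val.
Qed.

Lemma delta_rev r : inDelta r -> inDelta (revf r).
Proof.
move=> D; have n_gt1 := delta_n_gt1 D; apply/and3P; split.
- rewrite bit_rev; last lia.
  by rewrite (_ : n.+2 - n = 2) ?delta_b2 //; lia.
- by rewrite bit_rev1 ?delta_b1 //; lia.
apply/allP => i; rewrite mem_iota => ir.
have [->|i2] : i = 2 \/ 2 < i by lia.
  rewrite /= bit_rev1 ?bit_rev; try lia.
  by rewrite (_ : n.+2 - 2 = n) ?delta_bn //; lia.
rewrite !bit_rev; try lia.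
have e1 : (n.+3 - i).-1 = n.+2 - i by lia.
have e2 : n.+2 - i.-1 = n.+3 - i by lia.
by rewrite e2 andbC -e1; apply: delta_noadj; lia.
Qed.

Lemma sigma_rev r : inDelta r ->
  weight (revf r) = weight r /\
  forall j, j <= weight r -> sigma (revf r) j = n.+2 - sigma r (weight r - j).
Proof.
move=> D; have n_gt1 := delta_n_gt1 D; set k := weight r.
have [k0 decr sk ones] := sigma_struct (ltnW n_gt1) (delta_b1 D).
have bnd j : sigma r j <= n.+1 by have := sigma_bound r j; lia.
pose t j := n.+2 - sigma r (k - j).
have t0 : t 0 = n.+1 by rewrite /t subn0 sk; lia.
have t_decr j : j < k -> t j.+1 < t j.
  move=> jk; have := decr (k - j.+1) ltac:(lia).
  by rewrite /t (_ : (k - j.+1).+1 = k - j); [have := bnd (k - j.+1); lia | lia].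
have tk : 0 < t k by rewrite /t subnn /=; lia.
have t_ok : bits_ok (revf r) t k.
  move=> i /andP[i0 iN]; have [i1|i1] : i = 1 \/ 1 < i by lia.
    rewrite i1 bit_rev1 ?(delta_b1 D); last lia.
    apply/esym/hasP; exists k; first by rewrite mem_iota; lia.
    by rewrite /t subnn /=; apply/eqP; lia.
  rewrite bit_rev ?ones; try lia.
  apply/hasP/hasP => -[j]; rewrite mem_iota => jr /eqP E.
    have jk : j != k by apply/eqP => jk; move: E; rewrite jk sk; lia.
    exists (k - j); first by rewrite mem_iota; lia.
    by rewrite /t (_ : k - (k - j) = j); [apply/eqP; lia | lia].
  have jk : j != k by apply/eqP => jk; move: E; rewrite jk /t subnn /=; lia.
  exists (k - j); first by rewrite mem_iota; lia.
  by apply/eqP; move: E; rewrite /t; have := bnd (k - j); lia.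
by have [? ?] := sigma_char t0 t_decr tk t_ok.
Qed.

Definition spacing r l := sigma r l.-1 - sigma r l.

Lemma spacing_rev r l : inDelta r -> 0 < l <= weight r ->
  spacing (revf r) l = spacing r ((weight r).+1 - l).
Proof.
move=> D lr; have [_ E] := sigma_rev D; move: E lr; set k := weight r => E lr.
have e1 : k - l.-1 = (k - l).+1 by lia.
have e2 : k.+1 - l = (k - l).+1 by lia.
rewrite /spacing E; last lia.
rewrite E; last lia.
rewrite e1 e2 /=.
by have := sigma_le r (k - l); have := sigma_bound r (k - l); lia.
Qed.

End Reversal.

Section Lambda.
Variable n : nat.
Implicit Type r : {ffun 'I_n -> bool}.

Lemma weak_rev r : inDelta r ->
  weakly_decreasing (revf r) = weakly_increasing r.
Proof.
move=> D; have [w _] := sigma_rev D.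
rewrite /weakly_decreasing /weakly_increasing w; set k := weight r.
have sp l : 0 < l <= k -> spacing (revf r) l = spacing r (k.+1 - l).
  exact: spacing_rev.
apply/allP/allP => H l; rewrite mem_iota => lr.
  have : spacing (revf r) (k - l).+1 <= spacing (revf r) (k - l).
    by apply: H; rewrite mem_iota; lia.
  rewrite sp; last lia.
  rewrite sp; last lia.
  have -> : k.+1 - (k - l).+1 = l by lia.
  by have -> : k.+1 - (k - l) = l.+1 by lia.
have h : spacing r (k - l) <= spacing r (k - l).+1.
  by apply: H; rewrite mem_iota; lia.
change (spacing (revf r) l.+1 <= spacing (revf r) l).
rewrite sp; last lia.
rewrite sp; last lia.
have -> : k.+1 - l.+1 = k - l by lia.
by have -> : k.+1 - l = (k - l).+1 by lia.
Qed.

Lemma Lambda_rev r : Lambda2 (revf r) = Lambda1 r.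
Proof.
rewrite /Lambda1 /Lambda2; case: (boolP (inDelta r)) => D.
  by rewrite delta_rev // weak_rev.
by apply/negbTE; apply: contra D => /andP[/delta_rev]; rewrite revfK.
Qed.

Lemma sum_Lambda2_rev (V : nmodType) (F : {ffun 'I_n -> bool} -> V) :
  (\sum_(r | Lambda2 r) F r = \sum_(r | Lambda1 r) F (revf r))%R.
Proof.
rewrite (reindex_inj (inv_inj (@revfK n))); apply: eq_bigl => r.
exact: Lambda_rev.
Qed.

Lemma concave r : inDelta r -> weakly_increasing r ->
  forall j, 0 < j < weight r -> n.+2 <= sigma r j + sigma r (weight r - j).
Proof.
move=> D wi j jr; set k := weight r in jr wi *.
have [k0 decr sk ones] := sigma_struct (ltnW (delta_n_gt1 D)) (delta_b1 D).
have sp_step l : 0 < l < k -> spacing r l <= spacing r l.+1.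
  by move=> lr; move/allP: wi => /(_ l); rewrite mem_iota; apply; lia.
have sp_mono a e : 0 < a -> a + e <= k -> spacing r a <= spacing r (a + e).
  elim: e => [|e IH] a0 ae; first by rewrite addn0.
  by have := IH a0 ltac:(lia); have := sp_step (a + e) ltac:(lia); rewrite addnS; lia.
have tele c e : c + e <= k ->
    sigma r c - sigma r (c + e) = (\sum_(i < e) spacing r (c + i.+1))%N.
  elim: e => [|e IH] ce; first by rewrite big_ord0 addn0 subnn.
  rewrite big_ord_recr /= -IH; last lia.
  have := decr (c + e) ltac:(lia); have := decr_le decr (a := c) (b := c + e).
  by rewrite /spacing addnS /=; lia.
have : (\sum_(i < k - j) spacing r (0 + i.+1) <=
        \sum_(i < k - j) spacing r (j + i.+1))%N.
  apply: leq_sum => i _; rewrite add0n addnC.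
  by apply: sp_mono; have := ltn_ord i; lia.
rewrite -tele ?add0n; last lia.
rewrite -tele subnKC ?sk /=; try lia.
have := decr_le decr (a := 0) (b := k - j); have := decr_le decr (a := j) (b := k).
by rewrite sk /=; lia.
Qed.

End Lambda.

Section Comparison.
Variable n : nat.
Implicit Type r : {ffun 'I_n -> bool}.

Lemma prod_over_ones (R : comPzSemiRingType) r (h : nat -> R) a :
  inDelta r -> 2 <= a <= 3 ->
  (\prod_(a <= i < n.+1) (if bit r i then h i else 1) =
   \prod_(1 <= j < weight r) h (sigma r j))%R.
Proof.
move=> D ar; set k := weight r.
have [k0 decr sk ones] := sigma_struct (ltnW (delta_n_gt1 D)) (delta_b1 D).
set L := [seq sigma r j | j <- iota 1 k].
have uL : uniq L by apply: decr_uniq.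
rewrite -big_mkcond big_nat_cond.
transitivity (\prod_(a <= i < n.+1 | i \in L) h i)%R.
  rewrite [RHS]big_nat_cond; apply: eq_bigl => i.
  rewrite (bit_mem ones); case: (boolP (a <= i < n.+1)) => //= ir.
  by rewrite (_ : 0 < i <= n); last (apply/andP; lia).
rewrite -big_filter (perm_big _ (perm_filter_index_iota a n.+1 uL)) big_filter big_map.
have -> : iota 1 k = index_iota 1 k.+1 by rewrite /index_iota subn1.
rewrite big_mkcond big_nat_recr /=; last lia.
rewrite sk (_ : a <= 1 = false) /= ?mulr1; last lia.
apply: eq_big_nat => j jr; have := delta_range (j := j) D ltac:(lia).
by move=> h3; rewrite (_ : a <= sigma r j < n.+1) //; apply/andP; lia.
Qed.

Hypothesis n_gt3 : 3 < n.

Definition r0 : {ffun 'I_n -> bool} :=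
  [ffun j : 'I_n => ((j : nat) == 0) || ((j : nat) == n - 2)].

Lemma bit_r0 i : bit r0 i = (i == 1) || (i == n.-1).
Proof.
rewrite /r0 (@bit_ffun n (fun x => (x == 0) || (x == n - 2))).
by case: (boolP (0 < i <= n)) => i0 /=; do ! case: eqP => ? //=; lia.
Qed.

Lemma sigma_r0 : weight r0 = 2 /\ sigma r0 1 = n.-1 /\ sigma r0 2 = 1.
Proof.
pose t j := if j == 0 then n.+1 else if j == 1 then n.-1 else 1.
have t_decr j : j < 2 -> t j.+1 < t j by case: j => [|[|]] // _; rewrite /t /=; lia.
have t_ok : bits_ok r0 t 2.
  by move=> i ir; rewrite bit_r0 /= orbF /t /=; do ! case: eqP => ? //=; lia.
have [E ->] := sigma_char (erefl : t 0 = n.+1) t_decr (isT : 0 < t 2) t_ok.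
by rewrite !E.
Qed.

Lemma Lambda1_r0 : Lambda1 r0.
Proof.
have [w [s1 s2]] := sigma_r0.
apply/andP; split.
  apply/and3P; split; rewrite ?bit_r0 //=.
  - by do ! case: eqP => ? //=; lia.
  - apply/allP => i; rewrite mem_iota => ir; rewrite !bit_r0.
    by do ! case: eqP => ? //=; lia.
rewrite /weakly_increasing w; apply/allP => l; rewrite mem_iota => lr.
by rewrite (_ : l = 1) ?s1 ?s2 /=; lia.
Qed.

Local Open Scope ring_scope.

(* Pointwise P(r) <= P(rho r) on Lambda_1 by concavity, and the
   inequality is strict at r0. *)
Lemma Lambda_comparison (R : realType) (P : {ffun 'I_n -> bool} -> R) (c : R)
    (h : nat -> R) :
  0 < c -> (forall i, (3 <= i <= n.-1)%N -> 0 < h i) ->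
  (forall a b, (3 <= a <= b)%N -> (b <= n.-1)%N -> h b <= h a) ->
  h n.-1 < h 3 ->
  (forall r, inDelta r -> P r = c * \prod_(1 <= j < weight r) h (sigma r j)) ->
  \sum_(r | Lambda1 r) P r < \sum_(r | Lambda2 r) P r.
Proof.
move=> c0 h_pos h_mono h_strict P_prod; rewrite sum_Lambda2_rev.
have P_rev r : inDelta r -> P (revf r) =
    c * \prod_(1 <= j < weight r) h (n.+2 - sigma r (weight r - j))%N.
  move=> D; have [w E] := sigma_rev D.
  rewrite P_prod ?delta_rev // w; congr (_ * _); apply: eq_big_nat => j jr.
  by rewrite E //; lia.
have le_rev r : Lambda1 r -> P r <= P (revf r).
  move=> /andP[D wi]; rewrite P_rev // P_prod // ler_pM2l //.
  rewrite [X in X <= _]big_nat_cond [X in _ <= X]big_nat_cond.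
  apply: ler_prod => j /andP[/andP[j1 jk] _].
  have r1 := delta_range (j := j) D ltac:(lia).
  have r2 := delta_range (j := weight r - j) D ltac:(lia).
  have cc := concave D wi (j := j) ltac:(lia).
  by rewrite ltW ?h_pos //=; apply: h_mono; lia.
have [w [s1 _]] := sigma_r0.
have D0 : inDelta r0 by case/andP: Lambda1_r0.
rewrite (bigD1 r0) ?Lambda1_r0 //= [X in _ < X](bigD1 r0) ?Lambda1_r0 //=.
apply: ltr_leD; last by apply: ler_sum => r /andP[/le_rev].
rewrite P_rev // P_prod // w !big_nat1 s1 ltr_pM2l // (_ : n.+2 - n.-1 = 3)%N //; lia.
Qed.

End Comparison.

Local Open Scope ring_scope.

Lemma nonincr_of_steps (R : numDomainType) (h : nat -> R) (a b : nat) :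
  (forall i, (a < i <= b)%N -> h i <= h i.-1) ->
  forall i j, (a <= i <= j)%N -> (j <= b)%N -> h j <= h i.
Proof.
move=> step i j /andP[ai ij]; rewrite -(subnKC ij).
elim: (j - i)%N => [|d IH] jb; first by rewrite addn0.
rewrite addnS; have := step (i + d).+1 ltac:(lia); have := IH ltac:(lia).
by move=> le1 le2; apply: le_trans le2 le1.
Qed.

(* The algebra behind the hypothesis of part (a): with a = p_i, b = p_{i-1},
   c = p_{i-2}, it says q_i/(p_i p_{i-1}) < q_{i-1}/(p_{i-1} p_{i-2}). *)
Lemma ratio_step (F : realFieldType) (a b c : F) :
  0 < a < 1 -> 0 < b < 1 -> 0 < c ->
  1 < a * (1 - b) / (c * (1 - a)) -> (1 - a) / (a * b) < (1 - b) / (b * c).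
Proof.
move=> /andP[a0 a1] /andP[b0 b1] c0.
have d0 : 0 < c * (1 - a) by rewrite mulr_gt0 // subr_gt0.
rewrite ltr_pdivlMr // mul1r => h; rewrite -subr_gt0.
have -> : (1 - b) / (b * c) - (1 - a) / (a * b) =
          (a * (1 - b) - c * (1 - a)) / (a * b * c).
  by field; rewrite !gt_eqF.
by rewrite divr_gt0 ?subr_gt0 // !mulr_gt0.
Qed.

Section Markov.
Variables (R : realType) (n : nat) (p : nat -> R).
Hypothesis p_range : forall i, (3 <= i <= n)%N -> 0 < p i < 1.
Hypothesis p2 : p 2%N = 1.
Implicit Type r : {ffun 'I_n -> bool}.

(* For the chain, a one at position i contributes the factor
   q_i / (p_i p_{i-1}) relative to the all-zero path. *)
Definition chain_factor i := (1 - p i) / (p i * p i.-1).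

Lemma p_gt0 i : (2 <= i <= n)%N -> 0 < p i.
Proof.
move=> ir; have [->|i2] := eqVneq i 2%N; first by rewrite p2 ltr01.
by case/andP: (p_range (i := i) ltac:(lia)).
Qed.

Lemma chain_factor_gt0 i : (3 <= i <= n)%N -> 0 < chain_factor i.
Proof.
move=> ir; have /andP[p0 p1] := p_range ir.
by rewrite divr_gt0 ?subr_gt0 ?mulr_gt0 ?p_gt0 //; lia.
Qed.

Lemma markov_trans_split i prev cur :
  p i != 0 -> ~~ (prev && cur) ->
  markov_trans p i prev cur =
  p i * ((if cur then (1 - p i) / p i else 1) * (if prev then (p i)^-1 else 1)).
Proof.
move=> pn; rewrite /markov_trans; case: prev; case: cur => //= _.
- by rewrite mul1r divff.
- by field.
- by rewrite !mulr1.
Qed.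

Lemma markovP_prod r : (2 < n)%N -> inDelta r ->
  markovP p r = (\prod_(3 <= i < n.+1) p i) / p n *
                \prod_(3 <= i < n.+1) (if bit r i then chain_factor i else 1).
Proof.
move=> n_gt2 D.
have pn0 i : (2 <= i <= n)%N -> p i != 0 by move=> ir; rewrite gt_eqF ?p_gt0.
rewrite /markovP (delta_b2 D) (delta_b1 D) /= !mulr1.
pose prev i := if i.+1 == n.+1 then true else bit r i.+1.
have no_adj i : (3 <= i <= n)%N -> ~~ (prev i && bit r i).
  move=> ir; rewrite /prev; case: eqP => [e|ne]; last first.
    by have := delta_noadj D (i := i.+1); apply; lia.
  by rewrite (_ : i = n) ?(delta_bn D); lia.
rewrite (eq_big_nat _ _ (fun i (ir : (3 <= i < n.+1)%N) =>
  markov_trans_split (pn0 i ltac:(lia)) (no_adj i ir))).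
rewrite !big_split /= mulrAC -mulrA; congr (_ * _).
have prev_prod : \prod_(3 <= i < n.+1) (if prev i then (p i)^-1 else 1) =
    (p n)^-1 * \prod_(3 <= i < n.+1) (if bit r i then (p i.-1)^-1 else 1).
  rewrite big_nat_recr /=; last lia.
  rewrite /prev eqxx mulrC; congr (_ * _).
  rewrite [RHS]big_ltn; last lia.
  rewrite /= p2 invr1 if_same mul1r [RHS]big_add1 /=.
  apply: eq_big_nat => i ir; rewrite eqSS (_ : (i == n) = false) //.
  by apply/negbTE; rewrite neq_ltn; lia.
rewrite prev_prod mulrCA -big_split mulrC; congr (_ * _).
apply: eq_big_nat => i ir /=.
by case: (bit r i); rewrite ?mulr1 // /chain_factor invfM mulrA.
Qed.

Hypothesis p_ratio : forall i, (4 <= i <= n.-1)%N ->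
  1 < p i * (1 - p i.-1) / (p (i - 2)%N * (1 - p i)).

Lemma chain_factor_step i :
  (4 <= i <= n.-1)%N -> chain_factor i < chain_factor i.-1.
Proof.
move=> ir; have := p_ratio ir; rewrite /chain_factor (_ : i.-1.-1 = i - 2)%N; last lia.
by apply: ratio_step; rewrite ?p_range ?p_gt0 //; lia.
Qed.

Lemma chain_factor_nonincr a b : (3 <= a <= b)%N -> (b <= n.-1)%N ->
  chain_factor b <= chain_factor a.
Proof.
by apply: nonincr_of_steps => i ir; apply/ltW/chain_factor_step; lia.
Qed.

Lemma chain_factor_strict : (4 < n)%N -> chain_factor n.-1 < chain_factor 3.
Proof.
move=> n_gt4; apply: lt_le_trans (chain_factor_step _) (chain_factor_nonincr _ _); lia.
Qed.

Lemma markov_Lambda2_gt : (4 < n)%N ->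
  \sum_(r : {ffun 'I_n -> bool} | Lambda1 r) markovP p r <
  \sum_(r : {ffun 'I_n -> bool} | Lambda2 r) markovP p r.
Proof.
move=> n_gt4.
have c_gt0 : 0 < (\prod_(3 <= i < n.+1) p i) / p n.
  rewrite divr_gt0 ?p_gt0 1?big_nat_cond ?prodr_gt0 //; try lia.
  by move=> i /andP[ir _]; apply: p_gt0; lia.
apply: (Lambda_comparison (h := chain_factor) _ c_gt0); try lia.
- by move=> i ir; apply: chain_factor_gt0; lia.
- exact: chain_factor_nonincr.
- exact: chain_factor_strict.
- by move=> r D; rewrite markovP_prod ?(prod_over_ones _ D) //; lia.
Qed.

End Markov.

Section ConditionedBernoulli.
Variables (R : realType) (n : nat) (th : R).
Hypothesis th_gt0 : 0 < th.
Hypothesis n_gt3 : (3 < n)%N.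
Implicit Type r : {ffun 'I_n -> bool}.

(* Relative to xi_i = 0, a one at position i >= 2 has weight theta/(i-1). *)
Definition eta_factor i := th / (i.-1)%:R.

Lemma natr_pred_gt0 i : (2 <= i)%N -> 0 < (i.-1)%:R :> R.
Proof. by move=> i2; rewrite ltr0n; lia. Qed.

Lemma xiP_prod r : inDelta r ->
  xiP th r = (\prod_(2 <= i < n.+1) ((i%:R - 1) / (th + i%:R - 1))) *
             \prod_(2 <= i < n.+1) (if bit r i then eta_factor i else 1).
Proof.
move=> D; rewrite /xiP big_ltn; last lia.
rewrite (delta_b1 D) mulr1n addrK divff ?gt_eqF // mul1r.
rewrite -big_split; apply: eq_big_nat => i ir /=.
have -> : (i%:R : R) = (i.-1)%:R + 1 by rewrite natr1 prednK //; lia.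
rewrite addrA !addrK /eta_factor; case: (bit r i); last by rewrite mulr1.
have h1 := natr_pred_gt0 (i := i) ltac:(lia).
by rewrite /=; field; rewrite !gt_eqF ?addr_gt0.
Qed.

Lemma etaP_prod : exists2 c, 0 < c & forall r, inDelta r ->
  etaP th r = c * \prod_(1 <= j < weight r) eta_factor (sigma r j).
Proof.
pose Dc := \prod_(2 <= i < n.+1) ((i%:R - 1) / (th + i%:R - 1) : R).
have Dc_gt0 : 0 < Dc.
  rewrite /Dc big_nat_cond prodr_gt0 // => i /andP[/andP[i2 _] _].
  have -> : (i%:R : R) = (i.-1)%:R + 1 by rewrite natr1 prednK //; lia.
  have h1 := natr_pred_gt0 (i := i) ltac:(lia).
  by rewrite addrA !addrK divr_gt0 // addr_gt0.
have xi_gt0 r : inDelta r -> 0 < xiP th r.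
  move=> D; rewrite xiP_prod // mulr_gt0 // big_nat_cond prodr_gt0 //.
  move=> i /andP[/andP[i2 _] _]; case: (bit r i) => //.
  by rewrite divr_gt0 ?natr_pred_gt0.
pose Z := \sum_(s : {ffun 'I_n -> bool} | inDelta s) xiP th s.
have Z_gt0 : 0 < Z.
  have D0 : inDelta (r0 n) by case/andP: (Lambda1_r0 n_gt3).
  rewrite /Z (bigD1 (r0 n)) //= ltr_pwDl ?xi_gt0 //.
  by apply: sumr_ge0 => s /andP[D _]; apply/ltW/xi_gt0.
exists (Dc / Z); first by rewrite divr_gt0.
move=> r D; rewrite /etaP D xiP_prod // (prod_over_ones _ D) //.
by rewrite -/Z -/Dc mulrAC.
Qed.

Lemma eta_Lambda2_gt : (4 < n)%N ->
  \sum_(r : {ffun 'I_n -> bool} | Lambda1 r) etaP th r <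
  \sum_(r : {ffun 'I_n -> bool} | Lambda2 r) etaP th r.
Proof.
move=> n_gt4; have [c c_gt0 eta_eq] := etaP_prod.
apply: (Lambda_comparison (h := eta_factor) n_gt3 c_gt0 _ _ _ eta_eq).
- by move=> i ir; rewrite divr_gt0 ?natr_pred_gt0 //; lia.
- move=> a b ab bn; rewrite /eta_factor ler_pM2l //.
  by rewrite lef_pV2 ?posrE ?natr_pred_gt0 ?ler_nat; lia.
- rewrite /eta_factor ltr_pM2l // ltf_pV2 ?posrE ?natr_pred_gt0 ?ltr_nat; lia.
Qed.

Lemma etaP_rev r : inDelta r ->
  etaP th (revf r) =
  (\prod_(1 <= i < weight r) (((sigma r i).-1)%:R / (n.+1 - sigma r i)%:R)) * etaP th r.
Proof.
move=> D; have [c _ eta_eq] := etaP_prod; have [w E] := sigma_rev D.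
rewrite !eta_eq ?delta_rev // w mulrCA; congr (_ * _).
rewrite -big_split /= [LHS]big_nat_rev /=; apply: eq_big_nat => j jr.
rewrite E; last lia.
have -> : sigma r (weight r - (1 + weight r - j.+1)) = sigma r j by congr sigma; lia.
have := delta_range (j := j) D ltac:(lia) => sr.
rewrite /eta_factor (_ : (n.+2 - sigma r j).-1 = n.+1 - sigma r j)%N; last lia.
have h1 : ((n.+1 - sigma r j)%N%:R : R) != 0 by rewrite pnatr_eq0 -lt0n; lia.
have h2 : (((sigma r j).-1)%:R : R) != 0 by rewrite pnatr_eq0 -lt0n; lia.
by field; apply/andP.
Qed.

Lemma eta_Lambda2_sum :
  \sum_(r : {ffun 'I_n -> bool} | Lambda2 r) etaP th r =
  \sum_(r : {ffun 'I_n -> bool} | Lambda1 r)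
     (\prod_(1 <= i < weight r) (((sigma r i).-1)%:R / (n.+1 - sigma r i)%:R))
     * etaP th r.
Proof.
by rewrite sum_Lambda2_rev; apply: eq_bigr => r /andP[D _]; apply: etaP_rev.
Qed.

End ConditionedBernoulli.

Theorem mainTheorem8 (n : nat) (hn : (5 <= n)%N) :
  (forall (R : realType) (p : nat -> R),
     (forall i : nat, (3 <= i <= n)%N -> 0 < p i < 1) ->
     p 2%N = 1 ->
     (forall i : nat, (4 <= i <= n.-1)%N ->
        1 < p i * (1 - p i.-1) / (p (i - 2)%N * (1 - p i))) ->
     \sum_(r : {ffun 'I_n -> bool} | Lambda2 r) markovP p r >
     \sum_(r : {ffun 'I_n -> bool} | Lambda1 r) markovP p r)
  /\
  (forall (R : realType) (theta : R), 0 < theta ->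
     \sum_(r : {ffun 'I_n -> bool} | Lambda2 r) etaP theta r >
       \sum_(r : {ffun 'I_n -> bool} | Lambda1 r) etaP theta r
     /\
     \sum_(r : {ffun 'I_n -> bool} | Lambda2 r) etaP theta r =
       \sum_(r : {ffun 'I_n -> bool} | Lambda1 r)
          (\prod_(1 <= i < weight r)
             (((sigma r i).-1)%:R / (n.+1 - sigma r i)%:R))
          * etaP theta r).
Proof.
have n_gt3 : (3 < n)%N by apply: ltnW.
split=> R.
  by move=> p p_range p2 p_ratio; apply: markov_Lambda2_gt.
move=> theta theta_gt0; split.
  exact: eta_Lambda2_gt.
exact: eta_Lambda2_sum.
Qed.
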